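(* Let $F$ be a field of characteristic $\neq 2$ and $(V,q)$ a nondegenerate quadratic space over $F$. Let $\tau\in SO(V,q)$ be an involution, and let $W$ be the nondegenerate subspace of dimension $2r$ such that $\tau=-1|_W\oplus 1|_{W^\perp}$. Then $\tau$ lifts (under $\chi$) to an involution in $\Gamma^+(V,q)$ if and only if $\mathrm{disc}(W)=(-1)^r$, where $\mathrm{disc}(W)=\prod_{i=1}^{2r}q(v_i)$ for some orthogonal basis $\{v_1,\ldots,v_{2r}\}$ of $W$.
   Context: $C(V,q)=T(V)/\langle x\otimes x-q(x)\cdot1\rangle=C_0\oplus C_1$ is the Clifford algebra, $\Gamma(V,q)=\{u\in C(V,q)^\times: uVu^{-1}\subseteq V\}$ and $\Gamma^+(V,q)=\Gamma(V,q)\cap C_0(V,q)$. The vector representation $\chi:\Gamma^+(V,q)\to SO(V,q)$, $\chi(u)(x)=uxu^{-1}$, is surjective with kernel $F^*$. An involution is an element whose square is $1$. *)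

From HB Require Import structures.
From mathcomp Require Import all_boot all_order all_algebra.
Set Implicit Arguments.
Unset Strict Implicit.
Unset Printing Implicit Defensive.
Import Order.TTheory GRing.Theory.
Local Open Scope ring_scope.

Section QuadSpace.
Variables (F : fieldType) (n : nat).
Implicit Types (q : 'rV[F]_n -> F) (x y z : 'rV[F]_n).

Definition polar q x y : F := q (x + y) - q x - q y.

Definition is_quadratic_form q : Prop :=
  (forall (a : F) x, q (a *: x) = a ^+ 2 * q x) /\
  (forall x y z, polar q (x + y) z = polar q x z + polar q y z) /\
  (forall (a : F) x y, polar q (a *: x) y = a * polar q x y).

Definition quad_nondegenerate q : Prop :=
  forall x, (forall y, polar q x y = 0) -> x = 0.

(* tau (acting on row vectors by right multiplication) lies in SO(V,q) *)
Definition in_SO q (tau : 'M[F]_n) : Prop :=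
  (forall x, q (x *m tau) = q x) /\ \det tau = 1.

(* the subspace W (row space of the matrix W) is nondegenerate for q *)
Definition nondeg_subspace q (W : 'M[F]_n) : Prop :=
  forall w, (w <= W)%MS -> (forall w', (w' <= W)%MS -> polar q w w' = 0) -> w = 0.

Definition in_perp q (W : 'M[F]_n) x : Prop :=
  forall w, (w <= W)%MS -> polar q w x = 0.

(* disc(W) = d in F^*/F^*^2: for some orthogonal basis v_1..v_m (rows of B)
   of W, prod q(v_i) = d * c^2 with c <> 0 *)
Definition disc_eq q (W : 'M[F]_n) (m : nat) (d : F) : Prop :=
  exists B : 'M[F]_(m, n),
    [/\ row_free B, (B == W)%MS,
        (forall i j : 'I_m, i != j -> polar q (row i B) (row j B) = 0) &
        exists c : F, c != 0 /\ \prod_(i < m) q (row i B) = d * c ^+ 2].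

(* (C, iota) is a Clifford algebra of (V,q): iota linear, iota(x)^2 = q(x),
   and (C,iota) satisfies the universal property defining
   C(V,q) = T(V)/<x (x) x - q(x) 1>. *)
Definition is_clifford_algebra q (C : algType F) (iota : 'rV[F]_n -> C) : Prop :=
  [/\ (forall x y, iota (x + y) = iota x + iota y),
      (forall (a : F) x, iota (a *: x) = a *: iota x),
      (forall x, iota x * iota x = (q x)%:A) &
      forall (A : algType F) (f : 'rV[F]_n -> A),
        (forall x y, f (x + y) = f x + f y) ->
        (forall (a : F) x, f (a *: x) = a *: f x) ->
        (forall x, f x * f x = (q x)%:A) ->
        exists g : C -> A,
          [/\ (forall u v, g (u + v) = g u + g v),
              (forall (a : F) u, g (a *: u) = a *: g u),
              (forall u v, g (u * v) = g u * g v),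
              g 1 = 1 &
              (forall x, g (iota x) = f x) /\
              (forall g' : C -> A,
                 (forall u v, g' (u + v) = g' u + g' v) ->
                 (forall (a : F) u, g' (a *: u) = a *: g' u) ->
                 (forall u v, g' (u * v) = g' u * g' v) ->
                 g' 1 = 1 ->
                 (forall x, g' (iota x) = f x) ->
                 forall u, g' u = g u)]].

(* the even part C_0: the span of the products of an even number of vectors *)
Inductive even_part (C : algType F) (iota : 'rV[F]_n -> C) : C -> Prop :=
  | even_one : even_part iota 1
  | even_add u v : even_part iota u -> even_part iota v -> even_part iota (u + v)
  | even_scale (a : F) u : even_part iota u -> even_part iota (a *: u)
  | even_mul u x y : even_part iota u -> even_part iota (u * iota x * iota y).

Definition in_Gamma (C : algType F) (iota : 'rV[F]_n -> C) (u : C) : Prop :=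
  exists v : C, [/\ u * v = 1, v * u = 1 &
                    forall x, exists y, u * iota x * v = iota y].

Definition in_Gamma_plus (C : algType F) (iota : 'rV[F]_n -> C) (u : C) : Prop :=
  in_Gamma iota u /\ even_part iota u.

Definition chi_eq (C : algType F) (iota : 'rV[F]_n -> C) (u : C) (tau : 'M[F]_n) : Prop :=
  exists v : C, [/\ u * v = 1, v * u = 1 &
                    forall x, u * iota x * v = iota (x *m tau)].

End QuadSpace.

From HB Require Import structures.
From mathcomp Require Import all_boot all_order all_algebra.
From mathcomp Require Import ring.
From Stdlib Require Import Classical.
Set Implicit Arguments.
Unset Strict Implicit.
Unset Printing Implicit Defensive.
Import GRing.Theory.
Local Open Scope ring_scope.

(* If [disc W = (-1)^r], the product [w] of an orthogonal basis [v_1, ..., v_2r] of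
   [W] is an even element with [w x w^-1 = x *m tau] and
   [w^2 = (-1)^r q(v_1) ... q(v_2r)], a nonzero square; rescaling [w] gives an
   involutive lift.  Conversely, if [u] is an involutive lift, [u w] is even and
   central.  The universal property maps the Clifford algebra to the left regular
   representation of the Clifford algebra of a diagonalisation of [q], where even
   elements also commute with right multiplications; such operators are scalars.
   There [u = (mu / s) w] with [s = w^2], and [u^2 = 1] gives [s = mu^2]. *)

Lemma sign_neq0 (F : fieldType) k : (-1) ^+ k != 0 :> F.
Proof. by rewrite expf_neq0 // oppr_eq0 oner_eq0. Qed.

Lemma sign_sqr (F : fieldType) k : (-1) ^+ k * (-1) ^+ k = 1 :> F.
Proof. by rewrite -expr2 -exprM mulnC exprM sqrrN !expr1n. Qed.

Section PolarForm.
Variables (F : fieldType) (n : nat) (q : 'rV[F]_n -> F).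
Hypothesis qQ : is_quadratic_form q.

Lemma polarC x y : polar q x y = polar q y x.
Proof. by rewrite /polar [x + y]addrC -addrA [- _ - _]addrC addrA. Qed.

Lemma polarDl x y z : polar q (x + y) z = polar q x z + polar q y z.
Proof. by case: qQ => _ []. Qed.

Lemma polarZl (a : F) x y : polar q (a *: x) y = a * polar q x y.
Proof. by case: qQ => _ []. Qed.

Lemma polarDr x y z : polar q z (x + y) = polar q z x + polar q z y.
Proof. by rewrite polarC polarDl !(polarC _ z). Qed.

Lemma polarZr (a : F) x y : polar q y (a *: x) = a * polar q y x.
Proof. by rewrite polarC polarZl polarC. Qed.

Lemma quadZ (a : F) x : q (a *: x) = a ^+ 2 * q x.
Proof. by case: qQ. Qed.

Lemma quad0 : q 0 = 0.
Proof. by rewrite -(scale0r (0 : 'rV_n)) quadZ expr0n mul0r. Qed.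

Lemma polar0l y : polar q 0 y = 0.
Proof. by rewrite -(scale0r (0 : 'rV_n)) polarZl mul0r. Qed.

Lemma polarNl x y : polar q (- x) y = - polar q x y.
Proof. by rewrite -scaleN1r polarZl mulN1r. Qed.

Lemma polarBl x y z : polar q (x - y) z = polar q x z - polar q y z.
Proof. by rewrite polarDl polarNl. Qed.

Lemma polar_suml I (s : seq I) (P : pred I) (G : I -> 'rV_n) y :
  polar q (\sum_(i <- s | P i) G i) y = \sum_(i <- s | P i) polar q (G i) y.
Proof. by elim/big_rec2: _ => [|i a b _ <-]; rewrite ?polar0l ?polarDl. Qed.

Lemma polar_sumr I (s : seq I) (P : pred I) (G : I -> 'rV_n) y :
  polar q y (\sum_(i <- s | P i) G i) = \sum_(i <- s | P i) polar q y (G i).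
Proof. by rewrite polarC polar_suml; apply: eq_bigr => i _; apply: polarC. Qed.

Lemma polar_diag x : polar q x x = 2%:R * q x.
Proof. by rewrite /polar -{1 2}(scale1r x) -scalerDl quadZ; ring. Qed.

Definition polar_col y : 'cV[F]_n := \col_j polar q (delta_mx 0 j) y.

Lemma polar_colE x y : (x *m polar_col y) 0 0 = polar q x y.
Proof.
rewrite {2}(row_sum_delta x) polar_suml mxE; apply: eq_bigr => j _.
by rewrite mxE polarZl.
Qed.

Lemma sub_kermx_polar_col x y : (x <= kermx (polar_col y))%MS = (polar q x y == 0).
Proof.
rewrite sub_kermx -polar_colE; apply/eqP/eqP => [->|xy0]; first by rewrite mxE.
by rewrite [x *m _]mx11_scalar xy0 raddf0.
Qed.

End PolarForm.

Section OrthogonalBasis.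
Variables (F : fieldType) (n : nat) (q : 'rV[F]_n -> F).
Hypotheses (qQ : is_quadratic_form q) (two_neq0 : (2%:R : F) != 0).

Definition orth_rows m (B : 'M[F]_(m, n)) :=
  forall i j : 'I_m, i != j -> polar q (row i B) (row j B) = 0.

Definition anisotropic_rows m (B : 'M[F]_(m, n)) := forall i, q (row i B) != 0.

(* If [q] vanished on [U], so would the polar form. *)
Lemma nondeg_anisotropic_vector (U : 'M[F]_n) : nondeg_subspace q U -> \rank U != 0 ->
  exists2 v, (v <= U)%MS & q v != 0.
Proof.
move=> ndU rU; apply: NNPP => noV; move: rU; rewrite mxrank_eq0; apply/negP/negPn.
have qU0 v : (v <= U)%MS -> q v = 0.
  by move=> vU; apply/eqP/negPn/negP => qv; apply: noV; exists v.
apply/eqP/row_matrixP => i; rewrite row0; apply: ndU; first exact: row_sub.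
by move=> w wU; rewrite /polar !qU0 ?subrr ?addmx_sub ?row_sub.
Qed.

Section Complement.
Variables (U : 'M[F]_n) (v : 'rV[F]_n).
Hypotheses (ndU : nondeg_subspace q U) (vU : (v <= U)%MS) (qv : q v != 0).

Definition orth_compl := (U :&: kermx (polar_col q v))%MS.

Let polar_vv : polar q v v != 0.
Proof. by rewrite polar_diag // mulf_neq0. Qed.

Lemma orth_complS : (orth_compl <= U)%MS.
Proof. exact: capmxSl. Qed.

Lemma orth_compl_polar y : (y <= orth_compl)%MS -> polar q y v = 0.
Proof. by rewrite sub_capmx sub_kermx_polar_col // => /andP[_ /eqP]. Qed.

Let proj x := polar q x v / polar q v v.

Lemma orth_compl_proj x : (x <= U)%MS -> (x - proj x *: v <= orth_compl)%MS.
Proof.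
move=> xU; rewrite sub_capmx sub_kermx_polar_col // polarBl // polarZl //.
by rewrite divfK // subrr eqxx andbT addmx_sub // -scaleNr scalemx_sub.
Qed.

Lemma nondeg_orth_compl : nondeg_subspace q orth_compl.
Proof.
move=> w wU' w_perp; apply: ndU; first exact: submx_trans orth_complS.
move=> z zU; rewrite -(subrK (proj z *: v) z) polarDr // polarZr //.
by rewrite w_perp ?orth_compl_proj // orth_compl_polar // mulr0 addr0.
Qed.

Lemma orth_compl_adds : ((orth_compl + v)%MS == U)%MS.
Proof.
rewrite addsmx_sub orth_complS vU /=; apply/row_subP => i.
rewrite -(subrK (proj (row i U) *: v) (row i U)).
by rewrite addmx_sub_adds ?orth_compl_proj ?row_sub ?scalemx_sub.
Qed.

Lemma rank_orth_compl : \rank U = (\rank orth_compl).+1.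
Proof.
have cap0 : (orth_compl :&: v)%MS = 0.
  apply/eqP; rewrite -submx0; apply/rV_subP => y.
  rewrite sub_capmx => /andP[yU' /sub_rVP[a ya]].
  move: (orth_compl_polar yU'); rewrite ya polarZl // => /eqP.
  by rewrite mulf_eq0 (negPf polar_vv) orbF => /eqP->; rewrite scale0r sub0mx.
have v0 : v != 0 by apply: contraNneq qv => ->; rewrite quad0.
by rewrite -(eqmx_rank orth_compl_adds) mxrank_disjoint_sum // rank_rV v0 addn1.
Qed.

End Complement.

Lemma orth_basis_cons k (U : 'M[F]_n) (v : 'rV[F]_n) (B : 'M[F]_(k, n)) :
  (v <= U)%MS -> q v != 0 -> (B == orth_compl U v)%MS ->
  orth_rows B -> anisotropic_rows B ->
  let B' := \matrix_(i < k.+1) oapp (fun j => row j B) v (unlift ord0 i) in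
  [/\ (B' == U)%MS, orth_rows B' & anisotropic_rows B'].
Proof.
move=> vU qv /andP[BU' U'B] oB aB B'.
have B'0 : row ord0 B' = v by rewrite rowK unlift_none.
have B'S j : row (lift ord0 j) B' = row j B by rewrite rowK liftK.
have B_perp_v j : polar q (row j B) v = 0.
  by apply: orth_compl_polar; apply: submx_trans BU'; apply: row_sub.
split.
- have /andP[U'vU UU'v] := orth_compl_adds vU qv.
  apply/andP; split.
    apply/row_subP => i; case: (unliftP ord0 i) => [j|] ->; last by rewrite B'0.
    rewrite B'S; apply: submx_trans (row_sub _ _) (submx_trans BU' _).
    exact: orth_complS.
  apply: submx_trans UU'v _; rewrite addsmx_sub -{2}B'0 row_sub andbT.
  by apply: submx_trans U'B _; apply/row_subP => j; rewrite -B'S row_sub.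
- move=> i j; case: (unliftP ord0 i) => [i'|] ->; case: (unliftP ord0 j) => [j'|] ->.
  + by rewrite !B'S => ne; apply: oB; apply: contraNneq ne => ->.
  + by rewrite B'S B'0 B_perp_v.
  + by rewrite B'S B'0 polarC B_perp_v.
  + by rewrite eqxx.
- by move=> i; case: (unliftP ord0 i) => [i'|] ->; rewrite ?B'S ?B'0.
Qed.

Lemma orth_basis k (U : 'M[F]_n) : nondeg_subspace q U -> \rank U = k ->
  exists B : 'M[F]_(k, n), [/\ (B == U)%MS, orth_rows B & anisotropic_rows B].
Proof.
elim: k U => [|k IH] U ndU rU.
  exists 0; split; [|by rewrite /orth_rows => -[]|by rewrite /anisotropic_rows => -[]].
  by move/eqP: rU; rewrite mxrank_eq0 => /eqP->; apply/andP; split; apply: sub0mx.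
have [v vU qv] : exists2 v, (v <= U)%MS & q v != 0.
  by apply: nondeg_anisotropic_vector; rewrite // rU.
have [|B [BU' oB aB]] := IH (orth_compl U v) (nondeg_orth_compl ndU vU qv).
  by apply/eqP; rewrite -eqSS -(rank_orth_compl vU qv) rU.
by eexists; apply: orth_basis_cons BU' oB aB.
Qed.

Lemma quad_orth_coord (B : 'M[F]_n) : B \in unitmx -> orth_rows B ->
  forall x, q x = \sum_i (x *m invmx B) 0 i ^+ 2 * q (row i B).
Proof.
move=> Bu oB x; set c := x *m invmx B.
have xc : x = \sum_i c 0 i *: row i B by rewrite -mulmx_sum_row /c mulmxKV.
apply: (mulIf two_neq0); rewrite mulrC -polar_diag // mulr_suml {1 2}xc.
rewrite polar_suml //; apply: eq_bigr => i _.
rewrite polarZl // polar_sumr // (bigD1 i) //= big1 ?addr0.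
  by rewrite polarZr // polar_diag //; ring.
by move=> j ji; rewrite polarZr // polarC // oB ?mulr0 // eq_sym.
Qed.

End OrthogonalBasis.

Section CliffordRelations.
Variables (F : fieldType) (n : nat) (q : 'rV[F]_n -> F).
Hypothesis qQ : is_quadratic_form q.
Variables (C : algType F) (iota : 'rV[F]_n -> C).
Hypotheses (iotaD : forall x y, iota (x + y) = iota x + iota y)
           (iotaZ : forall (a : F) x, iota (a *: x) = a *: iota x)
           (iota_sqr : forall x, iota x * iota x = (q x)%:A).

Lemma iotaB x y : iota (x - y) = iota x - iota y.
Proof. by rewrite iotaD -scaleN1r iotaZ scaleN1r. Qed.

Lemma iota_anticomm x y : iota x * iota y + iota y * iota x = (polar q x y)%:A.
Proof.
have := iota_sqr (x + y); rewrite iotaD mulrDl !mulrDr !iota_sqr /polar !scalerBl.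
have cancel_squares (V : zmodType) (X s t Y : V) : s + t = X + s + (t + Y) - X - Y.
  by apply/esym/eqP; rewrite !subr_eq; apply/eqP; rewrite [RHS]addrC !addrA.
by move=> <-; apply: cancel_squares.
Qed.

(* Conjugation by [iota v] is minus the reflection in [v^perp]. *)
Lemma iota_commute_reflect y v : q v != 0 ->
  iota y * iota v = iota v * iota ((polar q y v / q v) *: v - y).
Proof.
move=> qv; rewrite iotaB iotaZ mulrBr -scalerAr iota_sqr scalerA divfK //.
by rewrite -iota_anticomm addrK.
Qed.

Variables (v : nat -> 'rV[F]_n) (m : nat).
Hypotheses (v_orth : forall i j, (i < m)%N -> (j < m)%N -> i != j ->
              polar q (v i) (v j) = 0)
           (v_aniso : forall i, (i < m)%N -> q (v i) != 0).

Definition clifford_prod k := \prod_(i < k) iota (v i).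

Let coef i x := polar q x (v i) / q (v i).

Lemma polar_orth_partial_sum k x : (k < m)%N ->
  polar q (\sum_(i < k) coef i x *: v i) (v k) = 0.
Proof.
move=> km; rewrite polar_suml // big1 // => i _.
rewrite polarZl // v_orth ?mulr0 //; first exact: ltn_trans (ltn_ord i) km.
by rewrite neq_ltn ltn_ord.
Qed.

Lemma iota_clifford_prod k x : (k <= m)%N ->
  iota x * clifford_prod k =
  clifford_prod k * iota ((-1) ^+ k *: (x - \sum_(i < k) coef i x *: v i)).
Proof.
elim: k => [|k IH] km.
  by rewrite /clifford_prod !big_ord0 subr0 expr0 scale1r mul1r mulr1.
rewrite /clifford_prod big_ord_recr /= mulrA IH ?(ltnW km) // -mulrA.
rewrite (iota_commute_reflect _ (v_aniso km)) mulrA; congr (_ * iota _).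
rewrite polarZl // polarBl // polar_orth_partial_sum // subr0 big_ord_recr /=.
rewrite exprS mulN1r scaleNr -mulrA -/(coef k x) -scalerA -scalerBr -scalerN.
by rewrite !opprB addrA [coef k x *: v k + _]addrC.
Qed.

Lemma iota_comm_clifford_prod k j : (k <= j)%N -> (j < m)%N ->
  iota (v j) * clifford_prod k = (-1) ^+ k *: (clifford_prod k * iota (v j)).
Proof.
move=> kj jm; rewrite iota_clifford_prod ?(leq_trans kj (ltnW jm)) //.
rewrite big1 ?subr0 ?iotaZ ?scalerAr // => i _.
have ij : (i < j)%N := leq_trans (ltn_ord i) kj.
by rewrite /coef v_orth ?mul0r ?scale0r ?(ltn_trans ij jm) // neq_ltn ij orbT.
Qed.

Lemma clifford_prod_double k : clifford_prod (2 * k.+1) =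
  clifford_prod (2 * k) * iota (v (2 * k)) * iota (v (2 * k).+1).
Proof. by rewrite mulnS /clifford_prod !big_ord_recr. Qed.

Lemma sqr_clifford_prod k : (2 * k <= m)%N ->
  clifford_prod (2 * k) * clifford_prod (2 * k) =
  ((-1) ^+ k * \prod_(i < 2 * k) q (v i))%:A.
Proof.
elim: k => [|k IH] km.
  by rewrite /clifford_prod muln0 !big_ord0 mulr1 expr0 mulr1 scale1r.
have km' : ((2 * k).+1 < m)%N by move: km; rewrite mulnS.
set P := clifford_prod (2 * k); set a := iota (v (2 * k)); set b := iota (v (2 * k).+1).
have even_sign : (-1) ^+ (2 * k) = 1 :> F by rewrite exprM sqrrN !expr1n.
have aP : a * P = P * a by rewrite iota_comm_clifford_prod ?(ltnW km') // even_sign scale1r.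
have bP : b * P = P * b by rewrite iota_comm_clifford_prod // even_sign scale1r.
have ba : b * a = - (a * b).
  apply/eqP; rewrite -addr_eq0 addrC iota_anticomm v_orth ?(ltnW km') ?scale0r //.
  by rewrite neq_ltn ltnSn.
rewrite clifford_prod_double -/P -/a -/b.
have -> : P * a * b * (P * a * b) = - ((P * P) * (a * a) * (b * b)).
  by rewrite -!mulrA (mulrA b) bP -(mulrA P) (mulrA a) aP -mulrA (mulrA b) ba
       mulNr !mulrN !mulrA.
rewrite IH ?(ltnW (ltnW km')) // !iota_sqr -!scalerAl mul1r -scalerAr mulr1.
rewrite !scalerA -scaleNr mulnS !big_ord_recr /= exprS; congr (_ *: 1); ring.
Qed.

Lemma even_clifford_prod k : even_part iota (clifford_prod (2 * k)).
Proof.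
elim: k => [|k IH]; first by rewrite /clifford_prod muln0 big_ord0; apply: even_one.
by rewrite clifford_prod_double; apply: even_mul.
Qed.

End CliffordRelations.

Section ReflectionProduct.
Variables (F : fieldType) (n : nat) (q : 'rV[F]_n -> F).
Hypotheses (qQ : is_quadratic_form q) (two_neq0 : (2%:R : F) != 0).
Variables (m : nat) (B : 'M[F]_(m, n)) (tau W : 'M[F]_n).
Hypotheses (B_orth : orth_rows q B) (B_aniso : anisotropic_rows q B) (BW : (B == W)%MS).
Hypotheses (tauW : forall w : 'rV_n, (w <= W)%MS -> w *m tau = - w)
           (tau_perp : forall x, in_perp q W x -> x *m tau = x).

(* Split [x] into a vector of [W] and a vector orthogonal to [W]. *)
Lemma involution_orth_sum x :
  x *m tau = x - \sum_(i < m) (polar q x (row i B) / q (row i B)) *: row i B.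
Proof.
have /andP[BsW WsB] := BW.
set c := fun i => polar q x (row i B) / q (row i B).
set S := \sum_(i < m) (c i / 2%:R) *: row i B.
have SW : (S <= W)%MS.
  by apply: submx_trans BsW; apply: summx_sub => i _; apply/scalemx_sub/row_sub.
have polarS i : polar q S (row i B) = polar q x (row i B).
  rewrite polar_suml // (bigD1 i) //= big1 ?addr0.
    by rewrite polarZl // polar_diag // /c; field; rewrite two_neq0 B_aniso.
  by move=> j ji; rewrite polarZl // B_orth ?mulr0.
have x_perp : in_perp q W (x - S).
  move=> w /submx_trans/(_ WsB)/submxP[a ->].
  rewrite mulmx_sum_row polar_suml // big1 // => i _.
  by rewrite polarZl // polarC // polarBl // polarS subrr mulr0.
rewrite -{1}(subrK S x) mulmxDl tau_perp // tauW // -addrA -opprD; congr (x - _).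
rewrite /S -big_split /=; apply: eq_bigr => i _; rewrite -scalerDl.
by congr (_ *: _); rewrite /c; field; rewrite two_neq0 B_aniso.
Qed.

End ReflectionProduct.

Lemma even_part_mul (F : fieldType) (n : nat) (C : algType F)
    (iota : 'rV[F]_n -> C) u v :
  even_part iota u -> even_part iota v -> even_part iota (u * v).
Proof.
move=> eu; elim=> [|x y _ ex _ ey|b y _ ey|y x1 x2 _ ey].
- by rewrite mulr1.
- by rewrite mulrDr; apply: even_add.
- by rewrite -scalerAr; apply: even_scale.
- by rewrite !mulrA; apply: even_mul.
Qed.

Lemma orth_basis_prod_lift (F : fieldType) (n : nat) (q : 'rV[F]_n -> F)
    (C : algType F) (iota : 'rV[F]_n -> C) (tau W : 'M[F]_n) (r : nat)
    (B : 'M[F]_(2 * r, n)) :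
  (2%:R : F) != 0 -> is_quadratic_form q ->
  (forall x y, iota (x + y) = iota x + iota y) ->
  (forall (a : F) x, iota (a *: x) = a *: iota x) ->
  (forall x, iota x * iota x = (q x)%:A) ->
  (forall w : 'rV_n, (w <= W)%MS -> w *m tau = - w) ->
  (forall x, in_perp q W x -> x *m tau = x) ->
  (B == W)%MS -> orth_rows q B -> anisotropic_rows q B ->
  exists2 w : C, even_part iota w &
    (forall x, iota x * w = w * iota (x *m tau)) /\
    w * w = ((-1) ^+ r * \prod_(i < 2 * r) q (row i B))%:A.
Proof.
move=> two_neq0 qQ iotaD iotaZ iota_sqr tauW tau_perp BW B_orth B_aniso.
pose v i := oapp (fun j => row j B) 0 (insub i).
have vE (j : 'I_(2 * r)) : v j = row j B by rewrite /v valK.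
have v_orth i j : (i < 2 * r)%N -> (j < 2 * r)%N -> i != j -> polar q (v i) (v j) = 0.
  move=> ir jr ij; rewrite -[i]/(val (Ordinal ir)) -[j]/(val (Ordinal jr)) !vE.
  by apply: B_orth; rewrite -val_eqE.
have v_aniso i : (i < 2 * r)%N -> q (v i) != 0.
  by move=> ir; rewrite -[i]/(val (Ordinal ir)) vE.
exists (clifford_prod iota v (2 * r)); first exact: even_clifford_prod.
split=> [x|].
  rewrite (iota_clifford_prod qQ iotaD iotaZ iota_sqr v_orth v_aniso) //.
  rewrite exprM sqrrN !expr1n scale1r.
  rewrite (involution_orth_sum qQ two_neq0 B_orth B_aniso BW tauW tau_perp).
  by congr (_ * iota (x - _)); apply: eq_bigr => i _; rewrite vE.
rewrite (sqr_clifford_prod qQ iotaD iotaZ iota_sqr v_orth v_aniso) //.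
by congr ((_ * _)%:A); apply: eq_bigr => i _; rewrite vE.
Qed.

Lemma involutive_lift_of_disc (F : fieldType) (n : nat) (q : 'rV[F]_n -> F)
    (C : algType F) (iota : 'rV[F]_n -> C) (tau W : 'M[F]_n) (r : nat) :
  (2%:R : F) != 0 -> is_quadratic_form q ->
  (forall x y, iota (x + y) = iota x + iota y) ->
  (forall (a : F) x, iota (a *: x) = a *: iota x) ->
  (forall x, iota x * iota x = (q x)%:A) ->
  tau *m tau = 1%:M ->
  (forall w : 'rV_n, (w <= W)%MS -> w *m tau = - w) ->
  (forall x, in_perp q W x -> x *m tau = x) ->
  disc_eq q W (2 * r) ((-1) ^+ r) ->
  exists u : C, [/\ in_Gamma_plus iota u, u * u = 1 & chi_eq iota u tau].
Proof.
move=> two_neq0 qQ iotaD iotaZ iota_sqr tau_invo tauW tau_perp.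
case=> B [_ BW B_orth [c [c_neq0 disc_c]]].
have B_aniso : anisotropic_rows q B.
  move=> i; apply: contraNneq (mulf_neq0 (sign_neq0 F r) (expf_neq0 2 c_neq0)) => qi.
  by rewrite -disc_c (bigD1 i) //= qi mul0r.
have [w even_w [tau_w sqr_w]] :=
  orth_basis_prod_lift two_neq0 qQ iotaD iotaZ iota_sqr tauW tau_perp BW B_orth B_aniso.
rewrite disc_c mulrA sign_sqr mul1r in sqr_w.
have c2_neq0 : c ^+ 2 != 0 by rewrite expf_neq0.
set u := c^-1 *: w.
have sqr_u : u * u = 1.
  by rewrite -scalerAl -scalerAr scalerA sqr_w scalerA -expr2 exprVn mulVf ?scale1r.
have conj_u x : u * iota x * u = iota (x *m tau).
  have w_tau : w * iota x = iota (x *m tau) * w.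
    by rewrite tau_w -mulmxA tau_invo mulmx1.
  rewrite -!scalerAl -scalerAr scalerA w_tau -mulrA sqr_w -scalerAr mulr1.
  by rewrite scalerA -expr2 exprVn mulVf ?scale1r.
exists u; split=> //; last by exists u.
split; last exact: even_scale.
by exists u; split=> // x; exists (x *m tau).
Qed.

Section SpinorModel.
Variables (F : fieldType) (n : nat) (a : 'I_n -> F).
Hypotheses (a_neq0 : forall i, a i != 0) (two_neq0 : (2%:R : F) != 0).

(* The number of subsets, as a successor so that square matrices of that size
   form an algebra. *)
Definition dim_ext := #|{: {set 'I_n}}|.-1.

Lemma card_subsets : #|{: {set 'I_n}}| = dim_ext.+1.
Proof. by rewrite prednK //; apply/card_gt0P; exists set0. Qed.

Definition set_of_ord (i : 'I_dim_ext.+1) : {set 'I_n} :=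
  enum_val (cast_ord (esym card_subsets) i).
Definition ord_of_set (S : {set 'I_n}) : 'I_dim_ext.+1 :=
  cast_ord card_subsets (enum_rank S).

Lemma set_of_ordK : cancel set_of_ord ord_of_set.
Proof. by move=> i; rewrite /set_of_ord /ord_of_set enum_valK cast_ordKV. Qed.

Lemma ord_of_setK : cancel ord_of_set set_of_ord.
Proof. by move=> S; rewrite /set_of_ord /ord_of_set cast_ordK enum_rankK. Qed.

(* Matrices indexed by the subsets of ['I_n]: operators on the space with basis
   [e_S = e_(i_1) ... e_(i_k)] ([S = {i_1 < ... < i_k}]) of the Clifford algebra of
   the diagonal form [sum a_i x_i^2]. *)
Definition setmx (f : {set 'I_n} -> {set 'I_n} -> F) : 'M[F]_dim_ext.+1 :=
  \matrix_(i, j) f (set_of_ord i) (set_of_ord j).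

Lemma setmxE f S T : setmx f (ord_of_set S) (ord_of_set T) = f S T.
Proof. by rewrite mxE !ord_of_setK. Qed.

Lemma setmx_eta (Z : 'M[F]_dim_ext.+1) :
  Z = setmx (fun S T => Z (ord_of_set S) (ord_of_set T)).
Proof. by apply/matrixP => i j; rewrite mxE !set_of_ordK. Qed.

Lemma eq_setmx f g : (forall S T, f S T = g S T) -> setmx f = setmx g.
Proof. by move=> fg; apply/matrixP => i j; rewrite !mxE fg. Qed.

Lemma mul_setmx f g : setmx f *m setmx g = setmx (fun S U => \sum_T f S T * g T U).
Proof.
apply/matrixP => i j; rewrite !mxE (reindex set_of_ord) /=.
  by apply: eq_bigr => k _; rewrite !mxE.
by exists ord_of_set => S _; [apply: set_of_ordK | apply: ord_of_setK].
Qed.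

Lemma add_setmx f g : setmx f + setmx g = setmx (fun S U => f S U + g S U).
Proof. by apply/matrixP => i j; rewrite !mxE. Qed.

Lemma scalar_setmx (c : F) : c%:M = setmx (fun S U => (S == U)%:R * c).
Proof.
apply/matrixP => i j; rewrite !mxE (inj_eq (can_inj set_of_ordK)).
by case: eqP; rewrite ?mulr1n ?mulr0n ?mul1r ?mul0r.
Qed.

Definition toggle (i : 'I_n) (S : {set 'I_n}) := [set k | (k == i) (+) (k \in S)].

Lemma in_toggle i S k : (k \in toggle i S) = (k == i) (+) (k \in S).
Proof. by rewrite inE. Qed.

Lemma toggleK i : involutive (toggle i).
Proof. by move=> S; apply/setP => k; rewrite !in_toggle addbA addbb. Qed.

Lemma toggleC i j S : toggle i (toggle j S) = toggle j (toggle i S).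
Proof. by apply/setP => k; rewrite !in_toggle addbCA. Qed.

Lemma eq_toggle i S T : (S == toggle i T) = (T == toggle i S).
Proof. by apply/eqP/eqP => ->; rewrite toggleK. Qed.

Lemma card_toggle i S : #|toggle i S| = if i \in S then #|S|.-1 else #|S|.+1.
Proof.
case: ifP => iS.
  have -> : toggle i S = S :\ i.
    by apply/setP => k; rewrite in_toggle !inE; case: eqP => // ->; rewrite iS.
  by rewrite (cardsD1 i S) iS.
have -> : toggle i S = i |: S.
  by apply/setP => k; rewrite in_toggle !inE; case: eqP => // ->; rewrite iS.
by rewrite cardsU1 iS.
Qed.

Lemma odd_card_toggle i S : odd #|toggle i S| = ~~ odd #|S|.
Proof. by rewrite card_toggle; case: ifP => // iS; rewrite (cardsD1 i S) iS negbK. Qed.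

Lemma sign_card_toggle i S : (-1) ^+ #|toggle i S| = - (-1) ^+ #|S| :> F.
Proof. by rewrite -signr_odd odd_card_toggle signrN signr_odd. Qed.

Definition sign_in (P : pred 'I_n) (S : {set 'I_n}) : F := (-1) ^+ #|[set k in S | P k]|.

Lemma sign_in_toggle P j U : sign_in P (toggle j U) = (-1) ^+ P j * sign_in P U.
Proof.
rewrite /sign_in; case Pj: (P j).
  have -> : [set k in toggle j U | P k] = toggle j [set k in U | P k].
    by apply/setP => k; rewrite !(inE, in_toggle); case: eqP => [->|]; rewrite ?Pj ?andbT.
  by rewrite sign_card_toggle expr1 mulN1r.
have -> : [set k in toggle j U | P k] = [set k in U | P k].
  by apply/setP => k; rewrite !(inE, in_toggle); case: eqP => [->|]; rewrite ?Pj ?andbF.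
by rewrite expr0 mul1r.
Qed.

Local Notation sign_below i := (sign_in (fun k : 'I_n => (k < i)%N)).
Local Notation sign_above i := (sign_in (fun k : 'I_n => (i < k)%N)).

Lemma sign_in0 P : sign_in P set0 = 1.
Proof.
rewrite /sign_in (_ : [set k in set0 | P k] = set0) ?cards0 //.
by apply/setP => k; rewrite !inE.
Qed.

Lemma sign_in_neq0 P S : sign_in P S != 0.
Proof. exact: sign_neq0. Qed.

Lemma sign_below_above (i : 'I_n) (T : {set 'I_n}) : i \in T ->
  sign_below i T * sign_above i T = - (-1) ^+ #|T|.
Proof.
move=> iT; rewrite /sign_in -exprD -cardsUI.
have -> : [set k in T | (k < i)%N] :&: [set k in T | (i < k)%N] = set0.
  apply/setP => k; rewrite !inE andbACA andbb; apply/negbTE.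
  by apply/negP => /andP[_ /andP[/ltn_trans/[apply]]]; rewrite ltnn.
have -> : [set k in T | (k < i)%N] :|: [set k in T | (i < k)%N] = T :\ i.
  by apply/setP => k; rewrite !inE -andb_orr andbC -neq_ltn -val_eqE.
by rewrite cards0 addn0 [in RHS](cardsD1 i T) iT exprS mulN1r opprK.
Qed.

Definition weight i (S : {set 'I_n}) : F := if i \in S then a i else 1.

Lemma weight_neq0 i S : weight i S != 0.
Proof. by rewrite /weight; case: ifP; rewrite ?a_neq0 ?oner_eq0. Qed.

Lemma weight0 i : weight i set0 = 1.
Proof. by rewrite /weight inE. Qed.

Lemma weight_toggle i j U : i != j -> weight i (toggle j U) = weight i U.
Proof. by move=> ij; rewrite /weight in_toggle (negPf ij). Qed.

Lemma weight_toggle_mul i U : weight i (toggle i U) * weight i U = a i.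
Proof. by rewrite /weight in_toggle eqxx; case: (i \in U); rewrite ?mulr1 ?mul1r. Qed.

Lemma weight_toggleC i j U :
  weight i (toggle j U) * weight j U = weight j (toggle i U) * weight i U.
Proof.
have [->//|ij] := eqVneq i j.
by rewrite weight_toggle // weight_toggle 1?eq_sym // mulrC.
Qed.

(* [left_gen i] is [e_T |-> e_i e_T] and [right_gen i] is [e_T |-> e_T e_i]; the sign
   counts the transpositions needed to move [e_i] into place. *)
Definition gen_mx (sgn : 'I_n -> {set 'I_n} -> F) i :=
  setmx (fun S T => (S == toggle i T)%:R * (sgn i T * weight i T)).

Definition left_gen := gen_mx (fun i => sign_below i).
Definition right_gen := gen_mx (fun i => sign_above i).

Lemma sum_toggle_r (f : {set 'I_n} -> F) j (h : F) U :
  \sum_T f T * ((T == toggle j U)%:R * h) = f (toggle j U) * h.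
Proof.
rewrite (bigD1 (toggle j U)) //= big1 ?addr0 ?eqxx ?mul1r // => T /negPf ->.
by rewrite mul0r mulr0.
Qed.

Lemma sum_toggle_l (g h : {set 'I_n} -> F) i S :
  \sum_T ((S == toggle i T)%:R * h T) * g T = h (toggle i S) * g (toggle i S).
Proof.
rewrite (bigD1 (toggle i S)) //= big1 ?addr0 ?toggleK ?eqxx ?mul1r // => T.
by rewrite eq_toggle => /negPf ->; rewrite !mul0r.
Qed.

Lemma left_gen_anticomm i j :
  left_gen i *m left_gen j + left_gen j *m left_gen i =
  (if i == j then 2%:R * a i else 0)%:M.
Proof.
rewrite !mul_setmx add_setmx scalar_setmx; apply: eq_setmx => S U.
rewrite !sum_toggle_r; have [<-|ij] := eqVneq i j.
  rewrite toggleK sign_in_toggle ltnn expr0 mul1r -(weight_toggle_mul i U).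
  set s := sign_in _ U; have ss : s * s = 1 by apply: sign_sqr.
  transitivity ((S == U)%:R * (2%:R * (weight i (toggle i U) * weight i U)) * (s * s)).
    by ring.
  by rewrite ss mulr1.
rewrite toggleC !sign_in_toggle !weight_toggle // 1?eq_sym // mulr0.
have -> : (-1) ^+ (i < j)%N = - (-1) ^+ (j < i)%N :> F.
  by case: (ltngtP i j) ij => [_ _|_ _|/val_inj ->]; rewrite ?expr0 ?expr1 ?opprK ?eqxx.
ring.
Qed.

Lemma left_right_gen_comm i j : left_gen i *m right_gen j = right_gen j *m left_gen i.
Proof.
rewrite !mul_setmx; apply: eq_setmx => S U.
rewrite !sum_toggle_r toggleC !sign_in_toggle.
have wC := weight_toggleC i j U.
transitivity ((S == toggle j (toggle i U))%:R * (-1) ^+ (j < i)%N *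
  sign_below i U * sign_above j U *
  (weight i (toggle j U) * weight j U)); first ring.
by rewrite wC; ring.
Qed.

Definition parity_mx (s : bool) (Z : 'M[F]_dim_ext.+1) :=
  forall S T, Z (ord_of_set S) (ord_of_set T) != 0 -> odd #|S| = s (+) odd #|T|.

Lemma parity_left_gen i : parity_mx true (left_gen i).
Proof.
move=> S T; rewrite setmxE; have [->|] := eqVneq S (toggle i T).
  by rewrite odd_card_toggle.
by rewrite mul0r eqxx.
Qed.

Lemma parity_add s Z Y : parity_mx s Z -> parity_mx s Y -> parity_mx s (Z + Y).
Proof.
move=> pZ pY S T; rewrite mxE.
have [Z0|Z_neq0 _] := eqVneq (Z (ord_of_set S) (ord_of_set T)) 0; last exact: pZ.
by rewrite Z0 add0r; apply: pY.
Qed.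

Lemma parity_scale s c Z : parity_mx s Z -> parity_mx s (c *: Z).
Proof. by move=> pZ S T; rewrite mxE mulf_eq0 negb_or => /andP[_]; apply: pZ. Qed.

Lemma parity_sum s k (G : 'I_k -> 'M[F]_dim_ext.+1) :
  (forall i, parity_mx s (G i)) -> parity_mx s (\sum_i G i).
Proof.
move=> pG; apply: (big_ind (parity_mx s)) => //; last exact: parity_add.
by move=> S T; rewrite mxE eqxx.
Qed.

Lemma parity1 : parity_mx false 1%:M.
Proof.
move=> S T; rewrite mxE (inj_eq (can_inj ord_of_setK)).
by have [->//|] := eqVneq S T; rewrite mulr0n eqxx.
Qed.

Lemma parity_mul s1 s2 Z Y :
  parity_mx s1 Z -> parity_mx s2 Y -> parity_mx (s1 (+) s2) (Z *m Y).
Proof.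
move=> pZ pY S T; rewrite mxE => ZY_neq0.
have [c] : exists c, Z (ord_of_set S) c * Y c (ord_of_set T) != 0.
  apply/existsP; apply: contraR ZY_neq0 => /existsPn ZY0.
  by apply/eqP; apply: big1 => c _; apply/eqP/negbNE/ZY0.
rewrite mulf_eq0 negb_or -(set_of_ordK c) => /andP[/pZ-> /pY->].
by rewrite addbA.
Qed.

Section EvenCommutant.
Variable Z : 'M[F]_dim_ext.+1.
Hypotheses (Z_even : parity_mx false Z)
           (Z_left : forall i, Z *m left_gen i = left_gen i *m Z)
           (Z_right : forall i, Z *m right_gen i = right_gen i *m Z).

Let z S T := Z (ord_of_set S) (ord_of_set T).

Lemma commute_gen_mx_entry sgn i : Z *m gen_mx sgn i = gen_mx sgn i *m Z ->
  forall S U, z S (toggle i U) * (sgn i U * weight i U) =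
    sgn i (toggle i S) * weight i (toggle i S) * z (toggle i S) U.
Proof.
move=> Zg S U; move: Zg; rewrite [Z]setmx_eta !mul_setmx.
move=> /(congr1 (fun M : 'M[F]_dim_ext.+1 => M (ord_of_set S) (ord_of_set U))).
by rewrite !setmxE sum_toggle_r sum_toggle_l.
Qed.

(* For [i \in T] with [#|T|] even, [left_gen i] and [right_gen i] map [e_T] to
   opposite multiples of [e_(T :\ i)], so [2 * z T set0 = 0]. *)
Lemma even_commutant_col0 T : T != set0 -> z T set0 = 0.
Proof.
case/set0Pn => i iT; case oddT: (odd #|T|).
  by apply/eqP; apply: contraTT oddT => /Z_even->; rewrite cards0.
have eqs sgn : Z *m gen_mx sgn i = gen_mx sgn i *m Z ->
    sgn i T * weight i T * z T set0 = z (toggle i T) (toggle i set0) * sgn i set0.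
  move=> /commute_gen_mx_entry/(_ (toggle i T) set0).
  by rewrite toggleK weight0 mulr1.
have := sign_below_above iT; rewrite -signr_odd oddT expr0 => below_above.
have above : sign_above i T = - sign_below i T.
  rewrite -[LHS]mul1r -(sign_sqr F #|[set k in T | (k < i)%N]|) -mulrA.
  by rewrite below_above mulrN1.
have /= left_eq := eqs _ (Z_left i); have /= right_eq := eqs _ (Z_right i).
have : (sign_below i T - sign_above i T) * weight i T * z T set0 = 0.
  by rewrite !mulrBl left_eq right_eq !sign_in0 subrr.
rewrite above opprK -mulr2n -mulr_natr => /eqP; rewrite !mulf_eq0.
rewrite (negPf (sign_in_neq0 _ _)) (negPf two_neq0) (negPf (weight_neq0 _ _)).
by move/eqP.
Qed.

Lemma even_commutant_entry S T : z S T = (S == T)%:R * z set0 set0.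
Proof.
have col0 S' : z S' set0 = (S' == set0)%:R * z set0 set0.
  by have [->|/even_commutant_col0->] := eqVneq S' set0; rewrite ?mul1r ?mul0r.
move: {2}#|T| (leqnn #|T|) => k; elim: k T S => [|k IH] T S.
  by rewrite leqn0 cards_eq0 => /eqP->.
have [->|/set0Pn[i iT] Tk] := eqVneq T set0; first by rewrite col0.
have wT : weight i (toggle i T) = 1 by rewrite /weight in_toggle eqxx iT.
have Tk' : (#|toggle i T| <= k)%N.
  by rewrite card_toggle iT -ltnS prednK //; apply/card_gt0P; exists i.
have /= := commute_gen_mx_entry (Z_left i) S (toggle i T).
rewrite toggleK (IH _ (toggle i S) Tk') wT mulr1.
have [->|ST] := eqVneq S T.
  by rewrite !eqxx mul1r wT mulr1 mulrC => /(mulfI (sign_in_neq0 _ _)).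
rewrite (inj_eq (can_inj (toggleK i))) (negPf ST) mul0r mulr0 => /eqP.
by rewrite mulf_eq0 (negPf (sign_in_neq0 _ _)) orbF => /eqP.
Qed.

Lemma even_commutant_scalar : Z = (z set0 set0)%:M.
Proof.
by rewrite [LHS]setmx_eta scalar_setmx; apply: eq_setmx; apply: even_commutant_entry.
Qed.

End EvenCommutant.

Lemma sqr_left_gen_comb (c : 'I_n -> F) :
  (\sum_i c i *: left_gen i) *m (\sum_i c i *: left_gen i) = (\sum_i c i ^+ 2 * a i)%:M.
Proof.
set D := _ *m _.
have DE : D = \sum_i \sum_j (c i * c j) *: (left_gen i *m left_gen j).
  rewrite /D mulmx_suml; apply: eq_bigr => i _; rewrite mulmx_sumr.
  by apply: eq_bigr => j _; rewrite -scalemxAl -scalemxAr scalerA.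
have DE' : D = \sum_i \sum_j (c i * c j) *: (left_gen j *m left_gen i).
  rewrite DE exchange_big /=; apply: eq_bigr => i _.
  by apply: eq_bigr => j _; rewrite mulrC.
have DD : D + D = ((\sum_i c i ^+ 2 * a i) * 2%:R)%:M.
  rewrite [X in X + _]DE [X in _ + X]DE' -big_split /= mulr_suml raddf_sum /=.
  apply: eq_bigr => i _; rewrite -big_split /= (bigD1 i) //= big1 ?addr0.
    rewrite -scalerDr left_gen_anticomm eqxx -scalemx1 scalerA scalemx1.
    by congr _%:M; ring.
  move=> j ji; rewrite -scalerDr left_gen_anticomm eq_sym (negPf ji).
  by rewrite -scalemx1 !scale0r scaler0.
have -> : D = 2%:R^-1 *: (D + D) by rewrite -mulr2n -scaler_nat scalerA mulVf // scale1r.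
by rewrite DD -scalemx1 scalerA scalemx1 mulrCA mulVf // mulr1.
Qed.

Lemma parity_left_gen_comb (c : 'I_n -> F) : parity_mx true (\sum_i c i *: left_gen i).
Proof. by apply: parity_sum => i; apply/parity_scale/parity_left_gen. Qed.

End SpinorModel.

(* [X = (mu / s) Y], hence [1 = X^2 = (mu / s)^2 s]. *)
Lemma scalar_mx_sqr_ratio (F : fieldType) k (X Y : 'M[F]_k.+1) (mu s : F) :
  s != 0 -> X *m Y = mu%:M -> Y *m Y = s%:M -> X *m X = 1%:M -> s = mu ^+ 2.
Proof.
move=> s_neq0 XY YY XX.
have XE : X = (mu / s) *: Y.
  have : s *: X = mu *: Y by rewrite -mul_mx_scalar -YY mulmxA XY mul_scalar_mx.
  by move/(congr1 ( *:%R s^-1)); rewrite !scalerA mulVf // scale1r mulrC.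
move: XX; rewrite XE -scalemxAl -scalemxAr YY !scale_scalar_mx.
move=> /(congr1 (fun M : 'M[F]_k.+1 => M 0 0)); rewrite !mxE eqxx !mulr1n => one.
have mu_neq0 : mu != 0.
  by apply: contra_eq_neq one => ->; rewrite mul0r mul0r eq_sym oner_eq0.
apply: (mulIf (invr_neq0 s_neq0)); rewrite mulfV // -one; field.
by rewrite s_neq0.
Qed.

Section SpinorRepresentation.
Variables (F : fieldType) (n : nat) (q : 'rV[F]_n -> F).
Hypotheses (qQ : is_quadratic_form q) (two_neq0 : (2%:R : F) != 0).
Variables (C : algType F) (iota : 'rV[F]_n -> C).
Variable Bv : 'M[F]_n.
Hypotheses (Bv_unit : Bv \in unitmx) (Bv_orth : orth_rows q Bv)
           (Bv_aniso : anisotropic_rows q Bv).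

Let a i := q (row i Bv).
Let coord (x : 'rV[F]_n) i := (x *m invmx Bv) 0 i.

Definition spinor_vec (x : 'rV[F]_n) := \sum_i coord x i *: left_gen a i.

Lemma spinor_vecD x y : spinor_vec (x + y) = spinor_vec x + spinor_vec y.
Proof.
by rewrite -big_split; apply: eq_bigr => i _; rewrite /coord mulmxDl mxE scalerDl.
Qed.

Lemma spinor_vecZ (c : F) x : spinor_vec (c *: x) = c *: spinor_vec x.
Proof.
by rewrite scaler_sumr; apply: eq_bigr => i _; rewrite /coord -scalemxAl mxE scalerA.
Qed.

Lemma spinor_vec_sqr x : spinor_vec x * spinor_vec x = (q x)%:A.
Proof.
by rewrite -mulmxE sqr_left_gen_comb // -quad_orth_coord // scalemx1.
Qed.

Lemma spinor_vec_basis i : spinor_vec (row i Bv) = left_gen a i.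
Proof.
rewrite /spinor_vec (bigD1 i) //= big1 ?addr0 => [|j ji];
  rewrite /coord -row_mul mulmxV // !mxE ?eqxx ?scale1r //.
by rewrite eq_sym (negPf ji) scale0r.
Qed.

Lemma spinor_vec_right_comm x j :
  spinor_vec x *m right_gen a j = right_gen a j *m spinor_vec x.
Proof.
rewrite mulmx_suml mulmx_sumr; apply: eq_bigr => i _.
by rewrite -scalemxAl -scalemxAr left_right_gen_comm.
Qed.

Variable g : C -> 'M[F]_((dim_ext n).+1).
Hypotheses (gD : forall u v, g (u + v) = g u + g v)
           (gZ : forall (c : F) u, g (c *: u) = c *: g u)
           (gM : forall u v, g (u * v) = g u * g v) (g1 : g 1 = 1)
           (g_iota : forall x, g (iota x) = spinor_vec x).

Lemma spinor_even_image e : even_part iota e ->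
  parity_mx false (g e) /\ forall j, g e *m right_gen a j = right_gen a j *m g e.
Proof.
elim=> [|x y _ [px cx] _ [py cy]|c y _ [py cy]|y x1 x2 _ [py cy]].
- by rewrite g1; split=> [|j]; [exact: parity1 | rewrite mul1mx mulmx1].
- rewrite gD; split=> [|j]; first exact: parity_add.
  by rewrite mulmxDl mulmxDr cx cy.
- rewrite gZ; split=> [|j]; first exact: parity_scale.
  by rewrite -scalemxAl cy scalemxAr.
- rewrite !gM !g_iota -!mulmxE; split=> [|j].
    apply: (@parity_mul _ _ true true); last exact: parity_left_gen_comb.
    by apply: (@parity_mul _ _ false true) => //; apply: parity_left_gen_comb.
  rewrite -!mulmxA spinor_vec_right_comm (mulmxA (spinor_vec x1)).
  by rewrite spinor_vec_right_comm !mulmxA cy.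
Qed.

(* [g e] is even and commutes with all generators, left and right. *)
Lemma spinor_even_central_scalar e : even_part iota e ->
  (forall x, iota x * e = e * iota x) -> exists mu, g e = mu%:M.
Proof.
move=> even_e central_e; have [pe ce] := spinor_even_image even_e.
eexists; apply: (even_commutant_scalar Bv_aniso two_neq0 pe _ ce) => i.
by rewrite -spinor_vec_basis -g_iota mulmxE -!gM central_e.
Qed.

End SpinorRepresentation.

Lemma disc_of_involutive_lift (F : fieldType) (n : nat) (q : 'rV[F]_n -> F)
    (C : algType F) (iota : 'rV[F]_n -> C) (tau W : 'M[F]_n) (r : nat) :
  (2%:R : F) != 0 -> is_quadratic_form q -> quad_nondegenerate q ->
  is_clifford_algebra q iota -> tau *m tau = 1%:M ->
  nondeg_subspace q W -> \rank W = (2 * r)%N ->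
  (forall w : 'rV_n, (w <= W)%MS -> w *m tau = - w) ->
  (forall x, in_perp q W x -> x *m tau = x) ->
  (exists u : C, [/\ in_Gamma_plus iota u, u * u = 1 & chi_eq iota u tau]) ->
  disc_eq q W (2 * r) ((-1) ^+ r).
Proof.
move=> two_neq0 qQ q_nondeg [iotaD iotaZ iota_sqr univ] tau_invo W_nondeg rankW.
move=> tauW tau_perp.
case=> u [[_ even_u] sqr_u [v [uv vu conj_u]]].
have [B [BW B_orth B_aniso]] := orth_basis qQ two_neq0 W_nondeg rankW.
have [w even_w [tau_w sqr_w]] :=
  orth_basis_prod_lift two_neq0 qQ iotaD iotaZ iota_sqr tauW tau_perp BW B_orth B_aniso.
set s := (-1) ^+ r * _ in sqr_w.
have s_neq0 : s != 0.
  by rewrite mulf_neq0 ?sign_neq0 //; apply/prodf_neq0 => i _; apply: B_aniso.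
have uw_central x : iota x * (u * w) = u * w * iota x.
  have u_tau y : u * iota y = iota (y *m tau) * u.
    by rewrite -conj_u -!mulrA vu mulr1.
  have iota_u : iota x * u = u * iota (x *m tau).
    by rewrite u_tau -mulmxA tau_invo mulmx1.
  by rewrite mulrA iota_u -mulrA tau_w -mulmxA tau_invo mulmx1 mulrA.
have V_nondeg : nondeg_subspace q 1%:M.
  by move=> x _ x_perp; apply: q_nondeg => y; apply: x_perp; apply: submx1.
have [Bv [Bv1 Bv_orth Bv_aniso]] := orth_basis qQ two_neq0 V_nondeg (mxrank1 F n).
have Bv_unit : Bv \in unitmx.
  by rewrite -row_free_unit /row_free (eqmx_rank Bv1) mxrank1.
have [g [gD gZ gM g1 [g_iota _]]] := univ _ (spinor_vec q Bv) (@spinor_vecD _ _ q Bv)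
  (@spinor_vecZ _ _ q Bv) (spinor_vec_sqr qQ two_neq0 Bv_unit Bv_orth).
have [mu g_uw] := spinor_even_central_scalar two_neq0 Bv_unit Bv_aniso gD gZ gM g1
  g_iota (even_part_mul even_u even_w) uw_central.
have s_mu2 : s = mu ^+ 2.
  apply: (scalar_mx_sqr_ratio s_neq0 (X := g u) (Y := g w)); rewrite mulmxE -gM //.
    by rewrite sqr_w gZ g1 scalemx1.
  by rewrite sqr_u g1.
exists B; split=> //; first by rewrite /row_free (eqmx_rank BW) rankW.
have mu_neq0 : mu != 0 by apply: contraNneq s_neq0 => mu0; rewrite s_mu2 mu0 expr0n.
by exists mu; split=> //; rewrite -s_mu2 /s mulrA sign_sqr mul1r.
Qed.

Theorem proposition4p1 (F : fieldType) (n : nat) (q : 'rV[F]_n -> F)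
  (C : algType F) (iota : 'rV[F]_n -> C)
  (tau : 'M[F]_n) (W : 'M[F]_n) (r : nat) :
  (2%:R : F) != 0 ->
  is_quadratic_form q ->
  quad_nondegenerate q ->
  is_clifford_algebra q iota ->
  in_SO q tau ->
  tau *m tau = 1%:M ->
  nondeg_subspace q W ->
  \rank W = (2 * r)%N ->
  (forall w : 'rV[F]_n, (w <= W)%MS -> w *m tau = - w) ->
  (forall x, in_perp q W x -> x *m tau = x) ->
  (exists u : C, [/\ in_Gamma_plus iota u, u * u = 1 & chi_eq iota u tau])
  <-> disc_eq q W (2 * r) ((-1) ^+ r).
Proof.
move=> two_neq0 qQ q_nondeg C_clifford _ tau_invo W_nondeg rankW tauW tau_perp.
split; first exact: disc_of_involutive_lift.
by case: C_clifford => iotaD iotaZ iota_sqr _; apply: involutive_lift_of_disc.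
Qed.
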